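(* Let $(b,c)$ be a locally finite connected weighted graph over $X$ such that $\sup_{x,y\in X}d(x,y)<\infty$. Then $X$ is totally bounded with respect to every metric $\sigma$ on $X$ which is intrinsic with respect to some measure $m$ on $X$ with $m(X)<\infty$.
   Context: Let $X$ be a countably infinite set. A weighted graph $(b,c)$ over $X$ consists of a symmetric $b:X\times X\to[0,\infty)$ with $b(x,x)=0$ and $\sum_{y}b(x,y)<\infty$ for all $x$, and $c:X\to[0,\infty)$. It is locally finite if each $x$ has finitely many $y$ with $b(x,y)>0$. A path is a finite sequence $(x_0,\dots,x_n)$ of pairwise distinct vertices with $b(x_{i-1},x_i)>0$; connected means any two distinct vertices are joined by a path. Define $d(x,y)=\inf\{\sum_{i=1}^n 1/b(x_{i-1},x_i):(x_0,\dots,x_n)\text{ a path from }x\text{ to }y\}$, $d(x,x)=0$. A measure on $X$ is $m:X\to[0,\infty)$ with $m(A)=\sum_{x\in A}m(x)$. A metric $\sigma$ on $X$ is intrinsic with respect to $m$ if $\frac12\sum_{y}b(x,y)\sigma(x,y)^2\le m(x)$ for all $x$. *)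

From Stdlib Require Import Reals Lra List ClassicalEpsilon.
Import ListNotations.
Open Scope R_scope.

(* X is countably infinite: enumerated bijectively by e : nat -> X. *)
Definition enumeration {X : Type} (e : nat -> X) : Prop :=
  (forall n k, e n = e k -> n = k) /\ (forall x, exists n, e n = x).

Definition sumX {X : Type} (e : nat -> X) (f : X -> R) (l : R) : Prop :=
  infinite_sum (fun n => f (e n)) l.

Definition weighted_graph {X : Type} (e : nat -> X) (b : X -> X -> R) (c : X -> R) : Prop :=
  (forall x y, 0 <= b x y) /\ (forall x y, b x y = b y x) /\ (forall x, b x x = 0) /\
  (forall x, exists l, sumX e (b x) l) /\ (forall x, 0 <= c x).

Definition locally_finite {X : Type} (b : X -> X -> R) : Prop :=
  forall x, exists l : list X, forall y, 0 < b x y -> In y l.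

Fixpoint chain {X : Type} (b : X -> X -> R) (p : list X) : Prop :=
  match p with
  | u :: ((v :: _) as t) => 0 < b u v /\ chain b t
  | _ => True
  end.

Definition is_path {X : Type} (b : X -> X -> R) (x y : X) (p : list X) : Prop :=
  hd_error p = Some x /\ last p x = y /\ NoDup p /\ chain b p.

Fixpoint path_len {X : Type} (b : X -> X -> R) (p : list X) : R :=
  match p with
  | u :: ((v :: _) as t) => 1 / b u v + path_len b t
  | _ => 0
  end.

Definition connected {X : Type} (b : X -> X -> R) : Prop :=
  forall x y, x <> y -> exists p, is_path b x y p.

Definition is_inf (S : R -> Prop) (v : R) : Prop :=
  (forall s, S s -> v <= s) /\ (forall w, (forall s, S s -> w <= s) -> w <= v).

Definition path_dist {X : Type} (b : X -> X -> R) (x y : X) : R :=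
  match excluded_middle_informative (x = y) with
  | left _ => 0
  | right _ =>
      epsilon (inhabits 0)
        (is_inf (fun s => exists p, is_path b x y p /\ s = path_len b p))
  end.

Definition is_metric {X : Type} (s : X -> X -> R) : Prop :=
  (forall x y, 0 <= s x y) /\ (forall x y, s x y = 0 <-> x = y) /\
  (forall x y, s x y = s y x) /\ (forall x y z, s x z <= s x y + s y z).

Definition is_measure {X : Type} (m : X -> R) : Prop := forall x, 0 <= m x.

Definition intrinsic {X : Type} (e : nat -> X) (b : X -> X -> R) (m : X -> R)
  (s : X -> X -> R) : Prop :=
  forall x, exists l, sumX e (fun y => b x y * (s x y) ^ 2) l /\ l / 2 <= m x.

Definition totally_bounded {X : Type} (s : X -> X -> R) : Prop :=
  forall eps, 0 < eps -> exists F : list X, forall x, exists z, In z F /\ s x z < eps.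

From Stdlib Require Import Reals Lra Lia List Classical ClassicalEpsilon.
Import ListNotations.
Open Scope R_scope.

(* Fix eps > 0, let C bound the graph distance d and choose
   delta = eps^2 / (2 (C + 1)).  Since m(X) < oo, there is a finite set K of
   vertices such that every finite set of vertices avoiding K has m-mass
   < delta ("tightness").  Given x, join it by a path of d-length < C + 1 to a
   fixed vertex of K and stop at the first vertex z of the path lying in K.
   Along the edges before z we have sigma(u,v)^2 <= 2 m(u) / b(u,v) by
   intrinsicness, so the triangle inequality and the Cauchy-Schwarz inequality
   give sigma(x,z)^2 <= 2 m(vertices outside K) * (path length)
   < 2 delta (C + 1) = eps^2.  Hence K is a finite eps-net for sigma. *)

Definition lsum {A : Type} (f : A -> R) (l : list A) : R :=
  fold_right (fun a s => f a + s) 0 l.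

Lemma lsum_app {A : Type} (f : A -> R) (l1 l2 : list A) :
  lsum f (l1 ++ l2) = lsum f l1 + lsum f l2.
Proof. induction l1 as [|a l1 IH]; simpl; [lra | rewrite IH; lra]. Qed.

Lemma lsum_nonneg {A : Type} (f : A -> R) (l : list A) :
  (forall a, 0 <= f a) -> 0 <= lsum f l.
Proof.
  intros Hf. induction l as [|a l IH]; simpl; [lra | specialize (Hf a); lra].
Qed.

Lemma lsum_map {A B : Type} (f : B -> R) (g : A -> B) (l : list A) :
  lsum f (map g l) = lsum (fun a => f (g a)) l.
Proof. induction l as [|a l IH]; simpl; [reflexivity | rewrite IH; reflexivity]. Qed.

Lemma lsum_seq (f : nat -> R) (n : nat) : lsum f (seq 0 (S n)) = sum_f_R0 f n.
Proof.
  induction n as [|n IH]; [simpl; lra|].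
  rewrite seq_S, lsum_app, IH. simpl. lra.
Qed.

Lemma lsum_le_initial_segment (f : nat -> R) (Hf : forall n, 0 <= f n) :
  forall M l, NoDup l -> (forall n, In n l -> (n < M)%nat) ->
  lsum f l <= lsum f (seq 0 M).
Proof.
  induction M as [|M IH]; intros l Hnd Hlt.
  - destruct l as [|n l]; [simpl; lra|].
    specialize (Hlt n (or_introl eq_refl)). lia.
  - rewrite seq_S, lsum_app. simpl. pose proof (Hf M) as HfM.
    destruct (in_dec Nat.eq_dec M l) as [HM|HM].
    + destruct (in_split _ _ HM) as [l1 [l2 ->]].
      assert (Hbelow : forall n, In n (l1 ++ l2) -> (n < M)%nat).
      { intros n Hn.
        assert (n <> M) by (intros ->; exact (NoDup_remove_2 _ _ _ Hnd Hn)).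
        assert (n < S M)%nat by (apply Hlt, in_or_app; apply in_app_or in Hn;
                                 simpl; tauto).
        lia. }
      pose proof (IH _ (NoDup_remove_1 _ _ _ Hnd) Hbelow) as Hle.
      rewrite lsum_app in Hle |- *. simpl. lra.
    + assert (Hbelow : forall n, In n l -> (n < M)%nat).
      { intros n Hn. assert (n <> M) by (intros ->; contradiction).
        specialize (Hlt n Hn). lia. }
      pose proof (IH l Hnd Hbelow). lra.
Qed.

Lemma series_finite_subsum (f : nat -> R) (l : R) :
  (forall n, 0 <= f n) -> infinite_sum f l ->
  forall L, NoDup L -> lsum f L <= l.
Proof.
  intros Hf Hs L Hnd.
  assert (Hbelow : forall n, In n L -> (n < S (list_max L))%nat).
  { intros n Hn.
    assert (Hmax : Forall (fun k => (k <= list_max L)%nat) L)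
      by (apply list_max_le; lia).
    rewrite Forall_forall in Hmax. specialize (Hmax n Hn). lia. }
  eapply Rle_trans; [exact (lsum_le_initial_segment f Hf _ L Hnd Hbelow)|].
  rewrite lsum_seq. apply growing_ineq; [|exact Hs].
  intros n. simpl. specialize (Hf (S n)). lra.
Qed.

Lemma enumeration_preimage {X : Type} (e : nat -> X) :
  enumeration e -> forall L : list X, exists ln, map e ln = L.
Proof.
  intros [_ Hsurj] L. induction L as [|x L [ln Hln]]; [exists []; reflexivity|].
  destruct (Hsurj x) as [n Hn]. exists (n :: ln). simpl. congruence.
Qed.

Lemma sumX_finite_subsum {X : Type} (e : nat -> X) (f : X -> R) (l : R) :
  enumeration e -> (forall x, 0 <= f x) -> sumX e f l ->
  forall L, NoDup L -> lsum f L <= l.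
Proof.
  intros He Hf Hs L Hnd.
  destruct (enumeration_preimage e He L) as [ln <-].
  rewrite lsum_map.
  apply (series_finite_subsum (fun n => f (e n))); auto.
  exact (NoDup_map_inv e ln Hnd).
Qed.

Lemma finite_measure_tight {X : Type} (e : nat -> X) (m : X -> R) (mX : R) :
  enumeration e -> is_measure m -> sumX e m mX ->
  forall delta, 0 < delta -> exists K : list X,
    forall L, NoDup L -> (forall v, In v L -> ~ In v K) -> lsum m L < delta.
Proof.
  intros He Hm Hs delta Hdelta.
  destruct (Hs delta Hdelta) as [N HN]. specialize (HN N (le_n N)).
  unfold Rdist in HN. apply Rabs_def2 in HN.
  exists (map e (seq 0 (S N))). intros L HndL Hout.
  assert (HndK : NoDup (map e (seq 0 (S N)))).
  { apply NoDup_map_NoDup_ForallPairs; [|apply seq_NoDup].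
    intros i j _ _. apply (proj1 He). }
  pose proof (sumX_finite_subsum e m mX He Hm Hs (L ++ map e (seq 0 (S N)))
                (NoDup_app HndL HndK Hout)) as Hle.
  rewrite lsum_app, lsum_map, lsum_seq in Hle. lra.
Qed.

Lemma intrinsic_edge_bound {X : Type} (e : nat -> X) (b : X -> X -> R)
  (m : X -> R) (sigma : X -> X -> R) :
  enumeration e -> (forall x y, 0 <= b x y) -> intrinsic e b m sigma ->
  forall x y, 0 < b x y -> sigma x y ^ 2 <= 2 * m x * (1 / b x y).
Proof.
  intros He Hb Hint x y Hxy.
  destruct (Hint x) as [l [Hl Hlm]].
  assert (Hterm : lsum (fun y => b x y * sigma x y ^ 2) [y] <= l).
  { apply (sumX_finite_subsum e); auto using NoDup_cons, NoDup_nil.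
    intros v. apply Rmult_le_pos; [apply Hb | apply pow2_ge_0]. }
  simpl in Hterm.
  replace (sigma x y ^ 2) with (b x y * sigma x y ^ 2 * (1 / b x y))
    by (field; lra).
  apply Rmult_le_compat_r; [left; apply Rdiv_lt_0_compat; lra | lra].
Qed.

Lemma cauchy_schwarz_step (A a U u V v : R) :
  0 <= A -> 0 <= a -> 0 <= U -> 0 <= u -> 0 <= V -> 0 <= v ->
  A ^ 2 <= U * V -> a ^ 2 <= u * v -> (A + a) ^ 2 <= (U + u) * (V + v).
Proof.
  intros HA Ha HU Hu HV Hv HAUV Hauv.
  assert (Hprod : (A * a) ^ 2 <= (U * v) * (u * V)).
  { replace ((A * a) ^ 2) with (A ^ 2 * a ^ 2) by ring.
    replace (U * v * (u * V)) with ((U * V) * (u * v)) by ring.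
    apply Rmult_le_compat; nra. }
  assert (Hcross : 2 * (A * a) <= U * v + u * V).
  { assert (0 <= U * v) by nra. assert (0 <= u * V) by nra.
    set (p := U * v) in *. set (q := u * V) in *. set (r := A * a) in *.
    pose proof (Rle_0_sqr (p - q)).
    apply Rsqr_incr_0_var; [unfold Rsqr in *; simpl in Hprod; nra | nra]. }
  nra.
Qed.

Lemma path_len_nonneg {X : Type} (b : X -> X -> R) (p : list X) :
  chain b p -> 0 <= path_len b p.
Proof.
  induction p as [|u [|v t] IH]; simpl; try lra.
  intros [Huv Hch]. specialize (IH Hch). simpl in IH.
  assert (0 < 1 / b u v) by (apply Rdiv_lt_0_compat; lra). lra.
Qed.

Lemma last_cons_default {X : Type} (y : X) (t : list X) (d d' : X) :
  last (y :: t) d = last (y :: t) d'.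
Proof.
  revert y. induction t as [|a t IH]; intros y; [reflexivity|].
  simpl. destruct t; [reflexivity | apply (IH a)].
Qed.

Section FirstHit.
Context {X : Type} (b : X -> X -> R) (m : X -> R) (sigma : X -> X -> R).
Hypothesis Hm : is_measure m.
Hypothesis Hsig : is_metric sigma.
Hypothesis Hedge : forall x y, 0 < b x y -> sigma x y ^ 2 <= 2 * m x * (1 / b x y).

Lemma first_hit_estimate (K : list X) (t : list X) :
  forall x, NoDup (x :: t) -> chain b (x :: t) -> In (last (x :: t) x) K ->
  exists z, In z K /\ exists l, NoDup l /\ incl l (x :: t) /\
    (forall v, In v l -> ~ In v K) /\
    sigma x z ^ 2 <= 2 * lsum m l * path_len b (x :: t).
Proof.
  destruct Hsig as [Hs0 [Hs1 [_ Hstri]]].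
  assert (Hstop : forall x p, chain b p -> In x K ->
    exists z, In z K /\ exists l, NoDup l /\ incl l p /\
      (forall v, In v l -> ~ In v K) /\ sigma x z ^ 2 <= 2 * lsum m l * path_len b p).
  { intros x p Hch HxK. exists x. split; [exact HxK|].
    exists []. split; [constructor|]. split; [intros ? []|].
    split; [intros ? []|].
    rewrite (proj2 (Hs1 x x) eq_refl). simpl.
    pose proof (path_len_nonneg b p Hch). nra. }
  induction t as [|y t IH]; intros x Hnd Hch Hlast.
  - apply Hstop; assumption.
  - destruct (classic (In x K)) as [HxK|HxK]; [apply Hstop; assumption|].
    destruct Hch as [Hxy Hch]. inversion Hnd as [|? ? Hxt Hnd']; subst.
    assert (Hlast' : In (last (y :: t) y) K).
    { simpl in Hlast |- *. destruct t; [exact Hlast|].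
      rewrite (last_cons_default _ _ y x). exact Hlast. }
    destruct (IH y Hnd' Hch Hlast') as [z [HzK [l [Hndl [Hincl [Hout Hbound]]]]]].
    exists z. split; [exact HzK|]. exists (x :: l). repeat split.
    + constructor; [intros Hxl; exact (Hxt (Hincl x Hxl)) | exact Hndl].
    + intros v [<- | Hv]; [left; reflexivity | right; exact (Hincl v Hv)].
    + intros v [<- | Hv]; [exact HxK | exact (Hout v Hv)].
    + pose proof (path_len_nonneg b _ Hch) as HL.
      pose proof (lsum_nonneg m l Hm) as Hml.
      assert (Hsq : sigma x z ^ 2 <= (sigma y z + sigma x y) ^ 2).
      { apply pow_incr. pose proof (Hs0 x z). pose proof (Hstri x y z). lra. }
      assert (Hcs := cauchy_schwarz_step (sigma y z) (sigma x y) (2 * lsum m l)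
                       (2 * m x) (path_len b (y :: t)) (1 / b x y)
                       (Hs0 y z) (Hs0 x y)).
      assert (0 < 1 / b x y) by (apply Rdiv_lt_0_compat; lra).
      pose proof (Hm x). pose proof (Hedge x y Hxy).
      change (path_len b (x :: y :: t)) with (1 / b x y + path_len b (y :: t)).
      simpl lsum. nra.
Qed.
End FirstHit.

Lemma inf_exists (S : R -> Prop) :
  (exists s, S s) -> (exists lb, forall s, S s -> lb <= s) -> exists v, is_inf S v.
Proof.
  intros [s0 Hs0] [lb Hlb].
  destruct (completeness (fun r => S (- r))) as [M [HM1 HM2]].
  - exists (- lb). intros r Hr. specialize (Hlb _ Hr). lra.
  - exists (- s0). rewrite Ropp_involutive. exact Hs0.
  - exists (- M). split.
    + intros s Hs. assert (- s <= M) by (apply HM1; rewrite Ropp_involutive; exact Hs).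
      lra.
    + intros w Hw. assert (M <= - w) by (apply HM2; intros r Hr; specialize (Hw _ Hr); lra).
      lra.
Qed.

Lemma inf_approx (S : R -> Prop) (v eps : R) :
  is_inf S v -> 0 < eps -> exists s, S s /\ s < v + eps.
Proof.
  intros [_ Hgreatest] Heps. apply NNPP. intros Hnone.
  assert (v + eps <= v); [|lra].
  apply Hgreatest. intros s Hs. apply Rnot_lt_le. intros Hlt.
  apply Hnone. exists s. split; assumption.
Qed.

Lemma path_dist_refl {X : Type} (b : X -> X -> R) (x : X) : path_dist b x x = 0.
Proof.
  unfold path_dist. destruct (excluded_middle_informative (x = x)); congruence.
Qed.

Lemma path_dist_is_inf {X : Type} (b : X -> X -> R) (x y : X) :
  connected b -> x <> y ->
  is_inf (fun s => exists p, is_path b x y p /\ s = path_len b p) (path_dist b x y).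
Proof.
  intros Hconn Hxy. unfold path_dist.
  destruct (excluded_middle_informative (x = y)) as [|_]; [contradiction|].
  apply epsilon_spec, inf_exists.
  - destruct (Hconn x y Hxy) as [p Hp]. exists (path_len b p), p. split; auto.
  - exists 0. intros s [p [[_ [_ [_ Hch]]] ->]]. apply path_len_nonneg, Hch.
Qed.

Lemma short_path {X : Type} (b : X -> X -> R) (x y : X) (C : R) :
  connected b -> x <> y -> path_dist b x y <= C ->
  exists p, is_path b x y p /\ path_len b p < C + 1.
Proof.
  intros Hconn Hxy HC.
  destruct (inf_approx _ _ 1 (path_dist_is_inf b x y Hconn Hxy) Rlt_0_1)
    as [s [[p [Hp ->]] Hs]].
  exists p. split; [exact Hp | lra].
Qed.

Theorem mainTheorem6 (X : Type) (e : nat -> X) (b : X -> X -> R) (c : X -> R) :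
  enumeration e ->
  weighted_graph e b c ->
  locally_finite b ->
  connected b ->
  (exists C, forall x y, path_dist b x y <= C) ->
  forall (sigma : X -> X -> R) (m : X -> R),
    is_metric sigma -> is_measure m -> (exists mX, sumX e m mX) ->
    intrinsic e b m sigma ->
    totally_bounded sigma.
Proof.
  intros He [Hb _] _ Hconn [C HC] sigma m Hsig Hm [mX HmX] Hint eps Heps.
  pose proof (HC (e O) (e O)) as HC0. rewrite path_dist_refl in HC0.
  set (delta := eps ^ 2 / (2 * (C + 1))).
  assert (Hdelta : 0 < delta) by (apply Rdiv_lt_0_compat; nra).
  destruct (finite_measure_tight e m mX He Hm HmX delta Hdelta) as [K HK].
  exists (e O :: K). intros x.
  destruct (classic (x = e O)) as [-> | Hx].
  { exists (e O). split; [left; reflexivity|].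
    rewrite (proj2 (proj1 (proj2 Hsig) _ _) eq_refl). exact Heps. }
  destruct (short_path b x (e O) C Hconn Hx (HC x (e O)))
    as [[|x0 t] [[Hhd [Hlast [Hnd Hch]]] Hlen]]; [discriminate|].
  injection Hhd as ->.
  destruct (first_hit_estimate b m sigma Hm Hsig
              (intrinsic_edge_bound e b m sigma He Hb Hint) (e O :: K) t x Hnd Hch)
    as [z [HzK [l [Hndl [_ [Hout Hbound]]]]]]; [rewrite Hlast; left; reflexivity|].
  exists z. split; [exact HzK|].
  assert (Hsmall : lsum m l < delta)
    by (apply HK; [exact Hndl | intros v Hv HvK; exact (Hout v Hv (or_intror HvK))]).
  pose proof (lsum_nonneg m l Hm). pose proof (path_len_nonneg b _ Hch).
  assert (Hsq : 2 * delta * (C + 1) = eps ^ 2) by (unfold delta; field; lra).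
  pose proof (proj1 Hsig x z). nra.
Qed.
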